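(* Let $\mathcal A$ and $\mathcal B$ be Fréchet algebras, let $I$ be a closed ideal of $\mathcal A$ and $J$ a closed ideal of $\mathcal B$. Suppose that $\mathcal A$ is amenable modulo $I$, and that $\varphi:\mathcal A\to\mathcal B$ is a continuous homomorphism with dense range such that $\varphi(I)\subseteq J$. Then $\mathcal B$ is amenable modulo $J$.
   Context: A Fréchet algebra $(\mathcal A,p_n)_{n\in\mathbb N}$ is a complete topological algebra whose topology is given by a countable increasing family of submultiplicative seminorms $p_n$. For a Fréchet algebra $\mathcal A$, a Banach $\mathcal A$-bimodule is a Banach space $E$ with an $\mathcal A$-bimodule structure whose module actions are separately continuous; $E^*$ is then a dual bimodule in the usual way. A continuous derivation $D:\mathcal A\to E^*$ is a continuous linear map with $D(ab)=a.D(b)+D(a).b$. For a closed ideal $I$ of a Fréchet algebra $\mathcal A$, $\mathcal A$ is called amenable modulo $I$ if for every Banach $\mathcal A$-bimodule $E$ with $E.I=I.E=0$ and every continuous derivation $D:\mathcal A\to E^*$ there exists $\eta\in E^*$ with $D(a)=a.\eta-\eta.a$ for all $a\in\mathcal A\setminus I$. *)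

From HB Require Import structures.
From mathcomp Require Import all_boot all_order all_algebra.
From mathcomp Require Import boolp classical_sets topology normedtype.
Set Implicit Arguments. Unset Strict Implicit. Unset Printing Implicit Defensive.
Import Order.TTheory GRing.Theory Num.Theory numFieldNormedType.Exports.
Local Open Scope classical_set_scope.
Local Open Scope ring_scope.

(* Scalars: an arbitrary numFieldType K (covers R and C).
   Seminorms and norms take values in K (nonnegative), as for mathcomp norms. *)

Section Frechet.
Variable K : numFieldType.

(* Continuity (epsilon-delta) of a map between spaces whose topologies are
   given by INCREASING countable families of seminorms p (on X), q (on Y). *)
Definition sn_continuous (X Y : zmodType) (p : nat -> X -> K) (q : nat -> Y -> K)
  (f : X -> Y) : Prop :=
  forall (x : X) (m : nat) (eps : K), 0 < eps ->
    exists n : nat, exists2 delta : K, 0 < delta &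
      forall y : X, p n (y - x) < delta -> q m (f y - f x) < eps.

Definition is_frechet_algebra (A : lmodType K) (mul : A -> A -> A)
  (p : nat -> A -> K) : Prop :=
  [/\ [/\ (forall a b c, mul a (mul b c) = mul (mul a b) c),
      (forall (k : K) a b c, mul (k *: a + b) c = k *: mul a c + mul b c) &
      (forall (k : K) a b c, mul a (k *: b + c) = k *: mul a b + mul a c)],
      [/\ (forall n x, 0 <= p n x),
      (forall n x y, p n (x + y) <= p n x + p n y),
      (forall n (k : K) x, p n (k *: x) = `|k| * p n x),
      (forall n x y, p n (mul x y) <= p n x * p n y) &
      (forall n x, p n x <= p n.+1 x)],
      (forall x, (forall n, p n x = 0) -> x = 0) &
      (forall u : nat -> A,
        (forall n (eps : K), 0 < eps -> exists N, forall i j, (N <= i)%N -> (N <= j)%N ->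
            p n (u i - u j) < eps) ->
        exists l : A, forall n (eps : K), 0 < eps -> exists N, forall i, (N <= i)%N ->
            p n (u i - l) < eps)].

Definition closed_ideal (A : lmodType K) (mul : A -> A -> A)
  (p : nat -> A -> K) (I : set A) : Prop :=
  [/\ I 0,
      (forall (k : K) x y, I x -> I y -> I (k *: x + y)),
      (forall a x, I x -> I (mul a x) /\ I (mul x a)) &
      (forall x, (forall n (eps : K), 0 < eps -> exists2 y, I y & p n (x - y) < eps) -> I x)].

Definition normfam (E : normedModType K) : nat -> E -> K := fun _ x => `|x|.
Arguments normfam : clear implicits.

(* Banach A-bimodule structure (lact : a.x, ract : x.a) on the Banach space E,
   with separately continuous module actions. *)
Definition banach_bimodule (A : lmodType K) (mul : A -> A -> A)
  (p : nat -> A -> K) (E : completeNormedModType K)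
  (lact : A -> E -> E) (ract : E -> A -> E) : Prop :=
  [/\ (forall (k : K) a b x, lact (k *: a + b) x = k *: lact a x + lact b x)
      /\ (forall (k : K) a x y, lact a (k *: x + y) = k *: lact a x + lact a y),
      (forall (k : K) a b x, ract x (k *: a + b) = k *: ract x a + ract x b)
      /\ (forall (k : K) a x y, ract (k *: x + y) a = k *: ract x a + ract y a),
      [/\ (forall a b x, lact (mul a b) x = lact a (lact b x)),
          (forall a b x, ract x (mul a b) = ract (ract x a) b) &
          (forall a b x, lact a (ract x b) = ract (lact a x) b)],
      (forall a, sn_continuous (normfam E) (normfam E) (lact a))
      /\ (forall x, sn_continuous p (normfam E) (fun a => lact a x)) &
      (forall a, sn_continuous (normfam E) (normfam E) (fun x => ract x a))
      /\ (forall x, sn_continuous p (normfam E) (fun a => ract x a))].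

Definition in_dual (E : normedModType K) (f : E -> K) : Prop :=
  (forall (k : K) x y, f (k *: x + y) = k * f x + f y) /\
  sn_continuous (normfam E) (fun _ (t : K) => `|t|) f.

(* Continuous derivation D : A -> E^*, with the dual bimodule structure
   (a.f)(x) = f(x.a),  (f.a)(x) = f(a.x), and E^* carrying its norm topology. *)
Definition cont_derivation (A : lmodType K) (mul : A -> A -> A)
  (p : nat -> A -> K) (E : completeNormedModType K)
  (lact : A -> E -> E) (ract : E -> A -> E) (D : A -> E -> K) : Prop :=
  [/\ (forall a, in_dual (D a)),
      (forall (k : K) a b x, D (k *: a + b) x = k * D a x + D b x),
      (forall a b x, D (mul a b) x = D b (ract x a) + D a (lact b x)) &
      (forall a (eps : K), 0 < eps -> exists n : nat, exists2 delta : K, 0 < delta &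
         forall b, p n (b - a) < delta -> forall x, `|D b x - D a x| <= eps * `|x|)].

Definition amenable_modulo (A : lmodType K) (mul : A -> A -> A)
  (p : nat -> A -> K) (I : set A) : Prop :=
  forall (E : completeNormedModType K) (lact : A -> E -> E) (ract : E -> A -> E),
    banach_bimodule mul p lact ract ->
    (forall i x, I i -> lact i x = 0 /\ ract x i = 0) ->
    forall D : A -> E -> K, cont_derivation mul p lact ract D ->
    exists2 eta : E -> K, in_dual eta &
      forall a, ~ I a -> forall x, D a x = eta (ract x a) - eta (lact a x).

Definition cont_homomorphism (A B : lmodType K) (mA : A -> A -> A) (mB : B -> B -> B)
  (p : nat -> A -> K) (q : nat -> B -> K) (phi : A -> B) : Prop :=
  [/\ (forall (k : K) a b, phi (k *: a + b) = k *: phi a + phi b),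
      (forall a b, phi (mA a b) = mB (phi a) (phi b)) &
      sn_continuous p q phi].

Definition dense_range (A B : lmodType K) (q : nat -> B -> K) (phi : A -> B) : Prop :=
  forall (b : B) (m : nat) (eps : K), 0 < eps -> exists a : A, q m (phi a - b) < eps.

End Frechet.

(* Pulling E and D back along phi gives a continuous derivation of A into a
   dual module annihilated by I, so amenability of A yields eta with
   D (phi a) = phi a . eta - eta . phi a for every a outside I.  For fixed x,
   the scalar map b |-> D b x - (eta (x.b) - eta (b.x)) is continuous on B and
   vanishes at each phi a outside J, as such an a lies outside I.  The
   complement of J is open and phi has dense range, so every b outside J is a
   limit of such points phi a, and the map vanishes at b as well. *)

From mathcomp Require Import all_boot all_order all_algebra.
From mathcomp Require Import boolp classical_sets topology normedtype.
From mathcomp Require Import ring.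
Import Order.TTheory GRing.Theory Num.Theory.
Local Open Scope classical_set_scope.
Local Open Scope ring_scope.
Set Implicit Arguments. Unset Strict Implicit.

Definition abs_family {K : numFieldType} : nat -> K -> K := fun _ t => `|t|.

Section SeminormNeighbourhoods.
Variable K : numFieldType.

Definition sn_nbhs (X : zmodType) (p : nat -> X -> K) (x : X) (P : X -> Prop) :=
  exists n : nat, exists2 delta : K, 0 < delta &
    forall y : X, p n (y - x) < delta -> P y.

Lemma sn_nbhs_comap (X Y : zmodType) (p : nat -> X -> K) (q : nat -> Y -> K)
    (f : X -> Y) (x : X) (P : Y -> Prop) :
  sn_continuous p q f -> sn_nbhs q (f x) P -> sn_nbhs p x (fun y => P (f y)).
Proof.
move=> fc [m [eps eps_gt0 fxP]].
have [n [delta delta_gt0 near_x]] := fc x m eps eps_gt0.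
by exists n; exists delta => // y /near_x /fxP.
Qed.

Lemma sn_continuous_comp (X Y Z : zmodType) (p : nat -> X -> K)
    (q : nat -> Y -> K) (r : nat -> Z -> K) (f : X -> Y) (g : Y -> Z) :
  sn_continuous p q f -> sn_continuous q r g -> sn_continuous p r (fun x => g (f x)).
Proof. by move=> fc gc x m eps /(gc (f x) m)/(sn_nbhs_comap fc). Qed.

Lemma sn_nbhsW (X : zmodType) (p : nat -> X -> K) (x : X) (P Q : X -> Prop) :
  (forall y, P y -> Q y) -> sn_nbhs p x P -> sn_nbhs p x Q.
Proof. by move=> PQ [n [delta delta_gt0 near_x]]; exists n; exists delta => // y /near_x /PQ. Qed.

Lemma sn_nbhsI (X : zmodType) (p : nat -> X -> K) (x : X) (P Q : X -> Prop) :
  (forall n y, p n y <= p n.+1 y) ->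
  sn_nbhs p x P -> sn_nbhs p x Q -> sn_nbhs p x (fun y => P y /\ Q y).
Proof.
move=> p_incr [n1 [d1 d1_gt0 near1]] [n2 [d2 d2_gt0 near2]].
have p_mono y := homo_leq lexx le_trans (p_incr^~ y).
have [d d_gt0 [d_le1 d_le2]] : exists2 d : K, 0 < d & d <= d1 /\ d <= d2.
  by case/orP: (real_leVge (gtr0_real d1_gt0) (gtr0_real d2_gt0)) => ?;
    [exists d1 | exists d2].
exists (maxn n1 n2); exists d => // y yx_lt; split.
- apply: near1; apply: le_lt_trans (p_mono _ _ _ (leq_maxl n1 n2)) _.
  exact: lt_le_trans yx_lt d_le1.
- apply: near2; apply: le_lt_trans (p_mono _ _ _ (leq_maxr n1 n2)) _.
  exact: lt_le_trans yx_lt d_le2.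
Qed.

Lemma sn_continuousB (X : zmodType) (p : nat -> X -> K) (f g : X -> K) :
  (forall n y, p n y <= p n.+1 y) ->
  sn_continuous p abs_family f -> sn_continuous p abs_family g ->
  sn_continuous p abs_family (fun x => f x - g x).
Proof.
move=> p_incr fc gc x m eps eps_gt0.
have eps2_gt0 : 0 < eps / 2%:R by rewrite divr_gt0 ?ltr0n.
apply: sn_nbhsW (sn_nbhsI p_incr (fc x m _ eps2_gt0) (gc x m _ eps2_gt0)).
move=> y [fy gy]; rewrite /abs_family.
have -> : f y - g y - (f x - g x) = (f y - f x) - (g y - g x) by ring.
by rewrite [eps]splitr; apply: le_lt_trans (ler_normB _ _) (ltrD fy gy).
Qed.

Lemma sn_nbhs_dense_range (A B : lmodType K) (q : nat -> B -> K) (phi : A -> B)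
    (b : B) (P : B -> Prop) :
  dense_range q phi -> sn_nbhs q b P -> exists a, P (phi a).
Proof.
by move=> dphi [n [delta delta_gt0 near_b]]; have [a /near_b] := dphi b n _ delta_gt0; exists a.
Qed.

Lemma sn_continuous_dense_eq0 (A B : lmodType K) (q : nat -> B -> K) (phi : A -> B)
    (g : B -> K) (U : B -> Prop) (b : B) :
  (forall n y, q n y <= q n.+1 y) -> dense_range q phi ->
  sn_continuous q abs_family g -> sn_nbhs q b U ->
  (forall a, U (phi a) -> g (phi a) = 0) -> g b = 0.
Proof.
move=> q_incr dphi gc Ub g0; apply/eqP/negPn/negP => gb_neq0.
have gb_gt0 : 0 < `|g b| by rewrite normr_gt0.
have [a [Ua]] := sn_nbhs_dense_range dphi (sn_nbhsI q_incr Ub (gc b 0%N _ gb_gt0)).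
by rewrite /abs_family g0 // sub0r normrN ltxx.
Qed.

Lemma sn_nbhs_setC (B : zmodType) (q : nat -> B -> K) (J : set B) (b : B) :
  (forall n y, q n (- y) = q n y) ->
  (forall y, (forall n (eps : K), 0 < eps -> exists2 z, J z & q n (y - z) < eps) -> J y) ->
  ~ J b -> sn_nbhs q b (~` J).
Proof.
move=> qN J_closed Jb.
have /existsNP [n /existsNP [delta /not_implyP [delta_gt0 farJ]]] : ~ (forall n (eps : K),
    0 < eps -> exists2 z, J z & q n (b - z) < eps) by move/J_closed.
exists n; exists delta => // y yb_lt Jy.
by apply: farJ; exists y; rewrite // -qN opprB.
Qed.

End SeminormNeighbourhoods.

Section DerivationContinuity.
Variables (K : numFieldType) (B : lmodType K) (mB : B -> B -> B) (q : nat -> B -> K).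
Variables (E : completeNormedModType K) (lact : B -> E -> E) (ract : E -> B -> E).

Lemma cont_derivation_continuous (D : B -> E -> K) (x : E) :
  cont_derivation mB q lact ract D -> sn_continuous q abs_family (fun b => D b x).
Proof.
move=> [_ _ _ D_cont] b m eps eps_gt0.
have c_gt0 : 0 < eps / (`|x| + 1) by rewrite divr_gt0 // ltr_wpDl.
apply: sn_nbhsW (D_cont b _ c_gt0) => y /(_ x) Dyx; rewrite /abs_family.
apply: le_lt_trans Dyx _.
by rewrite mulrAC ltr_pdivrMr ?ltr_wpDl // ltr_pM2l // ltrDl ltr01.
Qed.

End DerivationContinuity.

Section Comap.
Variables (K : numFieldType) (A B : lmodType K) (mA : A -> A -> A) (mB : B -> B -> B).
Variables (p : nat -> A -> K) (q : nat -> B -> K) (phi : A -> B).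
Hypothesis hphi : cont_homomorphism mA mB p q phi.
Variables (E : completeNormedModType K) (lact : B -> E -> E) (ract : E -> B -> E).

Lemma banach_bimodule_comap : banach_bimodule mB q lact ract ->
  banach_bimodule mA p (fun a => lact (phi a)) (fun x a => ract x (phi a)).
Proof.
case: hphi => phi_lin phi_mul phi_cont.
case=> [[lactDl lactDr] [ractDr ractDl] [lactM ractM lactract]
  [lact_cont lact_cont_l] [ract_cont ract_cont_r]].
split.
- by split=> *; rewrite ?phi_lin ?lactDl ?lactDr.
- by split=> *; rewrite ?phi_lin ?ractDr ?ractDl.
- by split=> *; rewrite ?phi_mul ?lactM ?ractM ?lactract.
- by split=> // x; apply: sn_continuous_comp phi_cont (lact_cont_l x).
- by split=> // x; apply: sn_continuous_comp phi_cont (ract_cont_r x).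
Qed.

Lemma cont_derivation_comap (D : B -> E -> K) : cont_derivation mB q lact ract D ->
  cont_derivation mA p (fun a => lact (phi a)) (fun x a => ract x (phi a))
    (fun a => D (phi a)).
Proof.
case: hphi => phi_lin phi_mul phi_cont [D_dual D_lin D_leibniz D_cont]; split.
- by move=> a; apply: D_dual.
- by move=> k a b x; rewrite phi_lin D_lin.
- by move=> a b x; rewrite phi_mul D_leibniz.
- by move=> a eps eps_gt0; apply: sn_nbhs_comap phi_cont (D_cont _ _ eps_gt0).
Qed.

End Comap.

Theorem proposition2p2 (K : numFieldType)
  (A : lmodType K) (mA : A -> A -> A) (p : nat -> A -> K)
  (B : lmodType K) (mB : B -> B -> B) (q : nat -> B -> K)
  (hA : is_frechet_algebra mA p) (hB : is_frechet_algebra mB q)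
  (I : set A) (J : set B)
  (hI : closed_ideal mA p I) (hJ : closed_ideal mB q J)
  (amenA : amenable_modulo mA p I)
  (phi : A -> B) (hphi : cont_homomorphism mA mB p q phi)
  (dphi : dense_range q phi) (phiIJ : phi @` I `<=` J) :
  amenable_modulo mB q J.
Proof.
case: hB => _ [_ _ qZ _ q_incr] _ _.
have qN n (y : B) : q n (- y) = q n y by rewrite -scaleN1r qZ normrN1 mul1r.
case: hJ => _ _ _ J_closed.
move=> E lact ract bim J_trivial D cD.
have I_trivial i x : I i -> lact (phi i) x = 0 /\ ract x (phi i) = 0.
  by move=> Ii; apply: J_trivial; apply: phiIJ; exists i.
have [eta eta_dual D_inner] := amenA E _ _ (banach_bimodule_comap hphi bim)
  I_trivial _ (cont_derivation_comap hphi cD).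
exists eta => // b Jb x; apply/eqP; rewrite -subr_eq0; apply/eqP.
pose g y := D y x - (eta (ract x y) - eta (lact y x)); rewrite -/(g b).
case: bim => _ _ _ [_ lact_cont] [_ ract_cont]; case: eta_dual => _ eta_cont.
apply: (sn_continuous_dense_eq0 q_incr dphi _ (sn_nbhs_setC qN J_closed Jb)).
- apply: (sn_continuousB q_incr (cont_derivation_continuous x cD)).
  by apply: (sn_continuousB q_incr); apply: sn_continuous_comp eta_cont.
- by move=> a Ja; rewrite /g D_inner ?subrr // => Ia; apply: Ja; apply: phiIJ; exists a.
Qed.
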